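(* Let $\lambda>0$, $L\ge1$, and let $\Sigma\in\mathbb{R}^{d\times d}$ be symmetric positive definite with simple spectrum $\sigma_1>\cdots>\sigma_d>0$ and unit eigenvectors $u_1,\dots,u_d$. Define, with $a=\mu^\top\Sigma\mu$ and $b=\mu^\top\Sigma^2\mu$, \[ \mathcal{R}_{\mathrm{lin},L}(\mu)=\operatorname{tr}(\Sigma)-\tfrac{2\lambda}{L}\operatorname{tr}(\Sigma)a-\tfrac{2\lambda(L+1)}{L}b+\tfrac{\lambda^2(L+2)}{L^2}\operatorname{tr}(\Sigma)a^2+\tfrac{\lambda^2(L+2)(L+3)}{L^2}ab. \] For $i=1,\dots,d$ let $\mu_i^\pm=\pm\gamma_i^\star u_i$ with $\gamma_i^\star=\sqrt{\frac{\operatorname{tr}(\Sigma)+(L+1)\sigma_i}{\frac{\lambda}{L}\sigma_i(L+2)(\operatorname{tr}(\Sigma)+(L+3)\sigma_i)}}$. Then $\mathrm{crit}(\mathcal{R}_{\mathrm{lin},L})=\{0\}\cup\{\mu_i^\pm:i=1,\dots,d\}$; $\nabla^2\mathcal{R}_{\mathrm{lin},L}(0)$ is negative definite, so $0$ is a local maximum; and $\nabla^2\mathcal{R}_{\mathrm{lin},L}(\mu_i^\pm)$ is diagonal in the eigenbasis of $\Sigma$, with eigenvalue along $u_j$ equal to $8\frac{\lambda}{L}\sigma_i(\operatorname{tr}(\Sigma)+(L+1)\sigma_i)$ if $j=i$, and $2\frac{\lambda}{L}\sigma_j(\sigma_i-\sigma_j)\frac{(L-1)\operatorname{tr}(\Sigma)+(L+1)(L+3)\sigma_i}{\operatorname{tr}(\Sigma)+(L+3)\sigma_i}$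 if $j\ne i$. In particular $\nabla^2\mathcal{R}_{\mathrm{lin},L}(\mu_1^\pm)$ is positive definite, and for $i>1$ $\nabla^2\mathcal{R}_{\mathrm{lin},L}(\mu_i^\pm)$ has both positive and negative eigenvalues. Consequently $\mu_1^\pm=\pm\gamma_1^\star u_1$ are global minimizers of $\mathcal{R}_{\mathrm{lin},L}$, and $\mu_i^\pm$ is a strict saddle for every $i>1$.
   Context: $\mathcal{R}_{\mathrm{lin},L}(\mu)$ equals $\mathbb{E}\|X_1-\frac{\lambda}{L}\sum_{k=1}^L(X_1^\top\mu\mu^\top X_k)X_k\|^2$ for $X_1,\dots,X_L$ i.i.d. $\mathcal{N}(0,\Sigma)$ (a linear attention risk). *)

From HB Require Import structures.
From mathcomp Require Import all_boot all_order all_algebra.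
From mathcomp Require Import all_classical all_reals all_analysis.
Set Implicit Arguments. Unset Strict Implicit. Unset Printing Implicit Defensive.
Import Order.TTheory GRing.Theory Num.Theory.
Import numFieldNormedType.Exports.
Local Open Scope classical_set_scope.
Local Open Scope ring_scope.

Section Defs.
Variables (R : realType) (d : nat).

Definition qf (A : 'M[R]_d) (v : 'cV[R]_d) : R := (v^T *m A *m v) 0 0.

Definition Rlin (Sigma : 'M[R]_d) (lam : R) (L : nat) (mu : 'cV[R]_d) : R :=
  let t := \tr Sigma in
  let a := qf Sigma mu in
  let b := qf (Sigma *m Sigma) mu in
  let L' := (L%:R : R) in
  t - (2 * lam / L') * t * a - (2 * lam * (L' + 1) / L') * b
    + (lam ^+ 2 * (L' + 2) / L' ^+ 2) * t * a ^+ 2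
    + (lam ^+ 2 * (L' + 2) * (L' + 3) / L' ^+ 2) * a * b.

Definition ev (j : 'I_d) : 'cV[R]_d := delta_mx j 0.

Definition crit (f : 'cV[R]_d -> R) : set 'cV[R]_d :=
  [set mu | differentiable f mu /\ forall v, 'd f mu v = 0].

Definition hessian (f : 'cV[R]_d -> R) (mu : 'cV[R]_d) : 'M[R]_d :=
  \matrix_(i, j) derive (fun x => derive f x (ev j)) mu (ev i).

Definition posdef (A : 'M[R]_d) := forall v : 'cV[R]_d, v != 0 -> 0 < qf A v.
Definition negdef (A : 'M[R]_d) := forall v : 'cV[R]_d, v != 0 -> qf A v < 0.

Definition local_max (f : 'cV[R]_d -> R) (mu : 'cV[R]_d) :=
  \forall x \near mu, f x <= f mu.

Definition global_min (f : 'cV[R]_d -> R) (mu : 'cV[R]_d) :=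
  forall x, f mu <= f x.

Definition strict_saddle (f : 'cV[R]_d -> R) (mu : 'cV[R]_d) :=
  crit f mu /\ exists a, eigenvalue (hessian f mu) a /\ a < 0.

End Defs.

From HB Require Import structures.
From mathcomp Require Import all_boot all_order all_algebra.
From mathcomp Require Import all_classical all_reals all_analysis.
From mathcomp Require Import ring lra.
Import Order.TTheory GRing.Theory Num.Theory.
Import numFieldNormedType.Exports.
Local Open Scope classical_set_scope.
Local Open Scope ring_scope.
Set Implicit Arguments. Unset Strict Implicit. Unset Printing Implicit Defensive.

(* The risk depends on mu only through a = mu^T Sigma mu and b = mu^T Sigma^2 mu,
   as the polynomial [risk t lam L a b]; its gradient is 2 (P Sigma mu + Q Sigma^2 mu)
   with P, Q the partial derivatives of [risk] in a and b.  Along the eigenvector u_j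
   the gradient is 2 sigma_j c_j (P + sigma_j Q), where c_j = <u_j, mu>.  At a critical
   point two nonzero coordinates c_j, c_k would force P = Q = 0, which is impossible
   since P > 0 whenever Q = 0 and b > 0; so a nonzero critical point is c u_i, and
   P + sigma_i Q = 0 is a linear equation in c^2 with root gamma_i^2.  There the
   Hessian 2 P Sigma + 2 Q Sigma^2 + (rank-two terms in Sigma mu and Sigma^2 mu) is
   diagonal in the eigenbasis, and its eigenvalue along u_j, j <> i, has the sign of
   sigma_i - sigma_j.  For global minimality, b <= sigma_1 a; writing b = r a, the
   minimum over a of [risk a (r a)] is t - h(r) with h increasing in r, and
   t - h(sigma_1) is attained at +-gamma_1 u_1. *)

Lemma is_derive_quadratic (R : realFieldType) (V : normedModType R) (f : V -> R)
    (x v : V) (c1 c2 : R) :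
  (forall h : R, f (h *: v + x) = f x + h * c1 + h ^+ 2 * c2) ->
  is_derive x v f c1.
Proof.
move=> fE.
have lim_c1 : (fun h : R => c1 + h * c2) @ (0 : R)^' --> c1.
  rewrite -[X in _ --> X]addr0 -[X in _ --> _ + X](mul0r c2).
  apply: cvgD; first exact: cvg_cst.
  by apply: cvgMr_tmp; apply: cvg_trans (cvg_within _); exact: cvg_id.
have quotE : (fun h : R => h^-1 *: ((f \o shift x) (h *: v) - f x)) @ (0 : R)^'
    --> c1.
  apply: cvg_trans lim_c1; apply: near_eq_cvg; near=> h.
  have h_neq0 : h != 0 by near: h; exact: nbhs_dnbhs_neq.
  by rewrite /= fE /GRing.scale /=; field.
by apply: DeriveDef; [apply/cvg_ex; exists c1 | exact: cvg_lim].
Unshelve. all: by end_near.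
Qed.

Lemma addmx_entry (R : ringType) m n (A B : 'M[R]_(m, n)) i j :
  (A + B) i j = A i j + B i j.
Proof. by rewrite mxE. Qed.

Lemma scalemx_entry (R : ringType) m n (c : R) (A : 'M[R]_(m, n)) i j :
  (c *: A) i j = c * A i j.
Proof. by rewrite mxE. Qed.

Section DotProduct.
Variables (R : realType) (d : nat).
Implicit Types (A : 'M[R]_d) (x y v w : 'cV[R]_d).

Definition vdot x y : R := (x^T *m y) 0 0.

Lemma vdotC x y : vdot x y = vdot y x.
Proof.
have -> : vdot x y = ((x^T *m y)^T) 0 0 by rewrite mxE.
by rewrite trmx_mul trmxK.
Qed.

Lemma vdotDr x y z : vdot x (y + z) = vdot x y + vdot x z.
Proof. by rewrite /vdot mulmxDr mxE. Qed.

Lemma vdotDl x y z : vdot (x + y) z = vdot x z + vdot y z.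
Proof. by rewrite vdotC vdotDr !(vdotC z). Qed.

Lemma vdotZr x y (c : R) : vdot x (c *: y) = c * vdot x y.
Proof. by rewrite /vdot -scalemxAr mxE. Qed.

Lemma vdotZl x y (c : R) : vdot (c *: x) y = c * vdot x y.
Proof. by rewrite vdotC vdotZr vdotC. Qed.

Lemma vdot0l y : vdot 0 y = 0.
Proof. by rewrite /vdot trmx0 mul0mx mxE. Qed.

Lemma vdot_sumr x I r (P : pred I) (F : I -> 'cV[R]_d) :
  vdot x (\sum_(i <- r | P i) F i) = \sum_(i <- r | P i) vdot x (F i).
Proof. by rewrite /vdot mulmx_sumr summxE. Qed.

Lemma vdot_evr x j : vdot x (ev R j) = x j 0.
Proof. by rewrite vdotC /vdot /ev trmx_delta -rowE mxE. Qed.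

Lemma vdot_mulmx_sym A x y : A^T = A -> vdot x (A *m y) = vdot (A *m x) y.
Proof. by move=> sA; rewrite /vdot trmx_mul sA mulmxA. Qed.

Lemma mulmx_ev_entry A i j : (A *m ev R j) i 0 = A i j.
Proof. by rewrite /ev -colE mxE. Qed.

Lemma vdot_mulmx_ev A i j : A^T = A -> vdot (A *m ev R i) (ev R j) = A i j.
Proof.
by move=> sA; rewrite -vdot_mulmx_sym // vdotC vdot_evr mulmx_ev_entry.
Qed.

Lemma outer_mx_entry x y i j : (x *m y^T) i j = x i 0 * y j 0.
Proof. by rewrite mxE big_ord1 mxE. Qed.

Lemma mul_outer_mx x y z : x *m y^T *m z = vdot y z *: x.
Proof. by rewrite -mulmxA [y^T *m z]mx11_scalar mul_mx_scalar. Qed.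

Lemma qfE A x : qf A x = vdot x (A *m x).
Proof. by rewrite /qf /vdot mulmxA. Qed.

Lemma ev_neq0 i : ev R i != 0 :> 'cV[R]_d.
Proof.
apply/eqP => /matrixP/(_ i 0); rewrite !mxE !eqxx /= => /eqP.
by rewrite oner_eq0.
Qed.

Lemma qf0 A : qf A 0 = 0.
Proof. by rewrite qfE vdot0l. Qed.

Lemma qf_ev A i : qf A (ev R i) = A i i.
Proof. by rewrite qfE vdotC vdot_evr mulmx_ev_entry. Qed.

Lemma qfDl A B x : qf (A + B) x = qf A x + qf B x.
Proof. by rewrite !qfE mulmxDl vdotDr. Qed.

Lemma qfZl c A x : qf (c *: A) x = c * qf A x.
Proof. by rewrite !qfE -scalemxAl vdotZr. Qed.

Lemma qf_along_line A x v (h : R) : A^T = A ->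
  qf A (h *: v + x) = qf A x + h * (2 * vdot (A *m x) v) + h ^+ 2 * qf A v.
Proof.
move=> sA; have xAv : vdot x (A *m v) = vdot (A *m x) v by apply: vdot_mulmx_sym.
rewrite !qfE mulmxDr -scalemxAr vdotDl !vdotDr !vdotZl !vdotZr xAv.
by rewrite (vdotC v (A *m x)); ring.
Qed.

Lemma is_derive_qf A x v : A^T = A -> is_derive x v (qf A) (2 * vdot (A *m x) v).
Proof. by move=> sA; apply: (is_derive_quadratic (c2 := qf A v)) => h; apply: qf_along_line. Qed.

Lemma is_derive_vdot_mulmx A w x v :
  is_derive x v (fun y => vdot (A *m y) w) (vdot (A *m v) w).
Proof.
apply: (is_derive_quadratic (c2 := 0)) => h.
by rewrite mulmxDr -scalemxAr vdotC vdotDr vdotZr !(vdotC w); ring.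
Qed.

Lemma differentiable_qf A x : differentiable (qf A) x.
Proof.
have -> : qf A = \sum_(l < d) \sum_(k < d) (fun y : 'cV[R]_d => y k 0 * A k l * y l 0).
  apply/funext => y; rewrite fct_sumE /qf mxE; apply: eq_bigr => l _.
  rewrite fct_sumE mxE mulr_suml; apply: eq_bigr => k _; by rewrite !mxE.
apply: differentiable_sum => l; apply: differentiable_sum => k.
apply: differentiableM; last exact: differentiable_coord.
by apply: differentiableM; [exact: differentiable_coord | exact: differentiable_cst].
Qed.

End DotProduct.

Section RiskProfile.
Variables (R : realFieldType) (t lam L : R).

Definition risk (a b : R) : R :=
  t - 2 * lam / L * t * a - 2 * lam * (L + 1) / L * b
    + lam ^+ 2 * (L + 2) / L ^+ 2 * t * a ^+ 2
    + lam ^+ 2 * (L + 2) * (L + 3) / L ^+ 2 * a * b.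

Definition kappa : R := lam ^+ 2 * (L + 2) / L ^+ 2.

Definition risk_da (a b : R) : R := 2 * kappa * t * a + kappa * (L + 3) * b - 2 * lam / L * t.

Definition risk_db (a : R) : R := kappa * (L + 3) * a - 2 * lam * (L + 1) / L.

Definition gamma_sq (s : R) : R :=
  (t + (L + 1) * s) / (lam / L * s * (L + 2) * (t + (L + 3) * s)).

(* [t - risk_floor r] is the minimum of [a |-> risk a (r * a)]. *)
Definition risk_floor (r : R) : R := (t + (L + 1) * r) ^+ 2 / ((L + 2) * (t + (L + 3) * r)).

Lemma kappa_gt0 : 0 < lam -> 1 <= L -> 0 < kappa.
Proof. by move=> lam_gt0 L_ge1; rewrite /kappa !(mulr_gt0, invr_gt0, exprn_gt0) //; lra. Qed.

Lemma gamma_sq_gt0 s : 0 < lam -> 1 <= L -> 0 < t -> 0 < s -> 0 < gamma_sq s.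
Proof.
by move=> lam_gt0 L_ge1 t_gt0 s_gt0; rewrite /gamma_sq !(mulr_gt0, invr_gt0, addr_gt0) //; lra.
Qed.

Lemma risk_partials_ray_eq0 s g : 0 < lam -> 1 <= L -> 0 < t -> 0 < s ->
  (risk_da (g * s) (g * s ^+ 2) + s * risk_db (g * s) == 0) = (g == gamma_sq s).
Proof.
move=> lam_gt0 L_ge1 t_gt0 s_gt0; have k_gt0 := kappa_gt0 lam_gt0 L_ge1.
have D_gt0 : 0 < t + (L + 3) * s by nra.
have -> : risk_da (g * s) (g * s ^+ 2) + s * risk_db (g * s)
    = 2 * kappa * s * (t + (L + 3) * s) * (g - gamma_sq s).
  rewrite /risk_da /risk_db /gamma_sq /kappa; field.
  by rewrite !(mulf_neq0, lt0r_neq0) //; lra.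
have c_gt0 : 0 < 2 * kappa * s * (t + (L + 3) * s).
  by do 3 apply: mulr_gt0 => //; lra.
by rewrite mulf_eq0 subr_eq0 (gt_eqF c_gt0).
Qed.

Lemma risk_da_gt0 a b : 0 < lam -> 1 <= L -> 0 <= t -> 0 < b ->
  risk_db a = 0 -> 0 < risk_da a b.
Proof.
move=> lam_gt0 L_ge1 t_ge0 b_gt0 /eqP; rewrite subr_eq0 => /eqP Ea.
have ka : kappa * a = 2 * lam * (L + 1) / L / (L + 3).
  rewrite -Ea; field; lra.
have -> : risk_da a b = 2 * lam / L * t * (L - 1) / (L + 3) + kappa * (L + 3) * b.
  transitivity (2 * t * (kappa * a) + kappa * (L + 3) * b - 2 * lam / L * t).
    by rewrite /risk_da; ring.
  by rewrite ka; field; lra.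
have k_gt0 := kappa_gt0 lam_gt0 L_ge1.
have : 0 < kappa * (L + 3) * b by do 2 apply: mulr_gt0 => //; lra.
have : 0 <= 2 * lam / L * t * (L - 1) / (L + 3).
  by rewrite !(mulr_ge0, invr_ge0) //; lra.
lra.
Qed.

Lemma risk_db_gamma_sq s : 0 < lam -> 1 <= L -> 0 < t -> 0 < s ->
  risk_db (gamma_sq s * s) =
    - (lam / L) * (((L - 1) * t + (L + 1) * (L + 3) * s) / (t + (L + 3) * s)).
Proof.
move=> lam_gt0 L_ge1 t_gt0 s_gt0; rewrite /risk_db /gamma_sq /kappa; field.
by rewrite !(mulf_neq0, lt0r_neq0) //; nra.
Qed.

Lemma gamma_sq_curvature s : 0 < lam -> 1 <= L -> 0 < t -> 0 < s ->
  8 * (gamma_sq s * s ^+ 2) * kappa * (t + (L + 3) * s) = 8 * (lam / L) * s * (t + (L + 1) * s).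
Proof.
move=> lam_gt0 L_ge1 t_gt0 s_gt0; rewrite /gamma_sq /kappa; field.
by rewrite !(mulf_neq0, lt0r_neq0) //; nra.
Qed.

Lemma risk_ge_floor a r : 1 <= L -> 0 < t -> 0 <= r -> t - risk_floor r <= risk a (r * a).
Proof.
move=> L_ge1 t_gt0 r_ge0; have D_gt0 : 0 < t + (L + 3) * r by nra.
have -> : risk a (r * a) = t - risk_floor r
   + (lam / L * (L + 2) * (t + (L + 3) * r) * a - (t + (L + 1) * r)) ^+ 2
     / ((L + 2) * (t + (L + 3) * r)).
  rewrite /risk /risk_floor; field.
  by rewrite !(mulf_neq0, lt0r_neq0) //; lra.
by rewrite lerDl divr_ge0 ?sqr_ge0 // mulr_ge0 //; lra.
Qed.

Lemma risk_floor_le r s : 1 <= L -> 0 < t -> 0 <= r -> r <= s -> risk_floor r <= risk_floor s.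
Proof.
move=> L_ge1 t_gt0 r_ge0 rs.
have Dr_gt0 : 0 < t + (L + 3) * r by nra.
have Ds_gt0 : 0 < t + (L + 3) * s by nra.
have -> : risk_floor s = risk_floor r + (s - r) *
   (t ^+ 2 * (L - 1) + t * (L + 1) ^+ 2 * (s + r) + (L + 1) ^+ 2 * (L + 3) * s * r)
   / ((L + 2) * (t + (L + 3) * r) * (t + (L + 3) * s)).
  rewrite /risk_floor; field.
  by rewrite !(mulf_neq0, lt0r_neq0) //; lra.
have : 0 <= t ^+ 2 * (L - 1) by rewrite mulr_ge0 ?sqr_ge0 //; lra.
have : 0 <= t * (L + 1) ^+ 2 * (s + r) by rewrite !mulr_ge0 ?sqr_ge0 //; lra.
have : 0 <= (L + 1) ^+ 2 * (L + 3) * s * r by rewrite !mulr_ge0 ?sqr_ge0 //; lra.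
move=> *; rewrite lerDl !(divr_ge0, mulr_ge0) //; lra.
Qed.

Lemma risk_gamma_sq s : 0 < lam -> 1 <= L -> 0 < t -> 0 < s ->
  risk (gamma_sq s * s) (gamma_sq s * s ^+ 2) = t - risk_floor s.
Proof.
move=> lam_gt0 L_ge1 t_gt0 s_gt0; rewrite /risk /risk_floor /gamma_sq; field.
by rewrite !(mulf_neq0, lt0r_neq0) //; nra.
Qed.

Lemma risk_gamma_sq_le a b s : 0 < lam -> 1 <= L -> 0 < t -> 0 < s -> 0 <= a -> 0 <= b -> b <= s * a ->
  risk (gamma_sq s * s) (gamma_sq s * s ^+ 2) <= risk a b.
Proof.
move=> lam_gt0 L_ge1 t_gt0 s_gt0 a_ge0 b_ge0 b_le; rewrite risk_gamma_sq //.
have [r [r_ge0 r_le bE]] : exists r, [/\ 0 <= r, r <= s & b = r * a].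
  have [a0|a_neq0] := eqVneq a 0.
    move: b_le; rewrite a0 !mulr0 => b_le0.
    by exists 0; rewrite mul0r; split; [| exact: ltW | apply/le_anti/andP].
  have a_gt0 : 0 < a by rewrite lt_def a_neq0.
  by exists (b / a); rewrite divr_ge0 // divfK // ler_pdivrMr.
rewrite bE; apply: le_trans (risk_ge_floor a L_ge1 t_gt0 r_ge0).
by rewrite lerB // risk_floor_le.
Qed.

Lemma risk_le_t a b : 0 < lam -> 1 <= L -> 0 <= t -> 0 <= a -> 0 <= b ->
  kappa * (L + 3) * a <= 2 * lam / L -> risk a b <= t.
Proof.
move=> lam_gt0 L_ge1 t_ge0 a_ge0 b_ge0 a_small; have k_gt0 := kappa_gt0 lam_gt0 L_ge1.
have -> : risk a b = t + t * a * (kappa * a - 2 * lam / L)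
                       + b * (kappa * (L + 3) * a - 2 * lam * (L + 1) / L).
  by rewrite /risk /kappa; field; lra.
have L_gt0 : 0 < L by lra.
have : 2 * lam / L <= 2 * lam * (L + 1) / L by rewrite ler_pM2r ?invr_gt0 //; nra.
have : kappa * a <= kappa * (L + 3) * a by rewrite -mulrA ler_pM2l //; nra.
have : 0 <= t * a by exact: mulr_ge0.
nra.
Qed.

End RiskProfile.

Section OrthonormalEigenbasis.
Variables (R : realType) (d : nat) (Sigma : 'M[R]_d).
Variables (sigma : 'I_d -> R) (u : 'I_d -> 'cV[R]_d).
Hypotheses (Sigma_sym : Sigma^T = Sigma) (sigma_inj : injective sigma).
Hypotheses (Sigma_u : forall i, Sigma *m u i = sigma i *: u i).
Hypotheses (u_unit : forall i, (u i)^T *m u i = 1).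

Lemma vdot_eigvec i j : vdot (u i) (u j) = (i == j)%:R.
Proof.
have [<-|ij] := eqVneq i j; first by rewrite /vdot u_unit mxE.
have : (sigma i - sigma j) * vdot (u i) (u j) = 0.
  by rewrite mulrBl -vdotZl -vdotZr -Sigma_u -Sigma_u vdot_mulmx_sym // subrr.
move/eqP; rewrite mulf_eq0 subr_eq0 (inj_eq sigma_inj) (negPf ij).
by move/eqP.
Qed.

Lemma eigvec_expansion x : x = \sum_j vdot (u j) x *: u j.
Proof.
pose U : 'M[R]_d := \matrix_(k, j) u j k 0.
have UtU : U^T *m U = 1%:M.
  apply/matrixP => i j; rewrite !mxE -vdot_eigvec /vdot mxE.
  by apply: eq_bigr => k _; rewrite !mxE.
rewrite -[LHS]mul1mx -(mulmx1C UtU) -mulmxA.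
apply/matrixP => k l; rewrite mxE summxE; apply: eq_bigr => j _.
rewrite !mxE /vdot mxE (ord1 l) mulrC; congr (_ * _).
by apply: eq_bigr => m _; rewrite !mxE.
Qed.

Lemma qf_eigvec_expansion A (lv : 'I_d -> R) x :
    (forall j, A *m u j = lv j *: u j) ->
  qf A x = \sum_j lv j * vdot (u j) x ^+ 2.
Proof.
move=> A_u; rewrite qfE {2}(eigvec_expansion x) mulmx_sumr vdot_sumr.
by apply: eq_bigr => j _; rewrite -scalemxAr A_u scalerA vdotZr vdotC; ring.
Qed.

Lemma eigvec_coord_neq0 x : x != 0 -> exists j, vdot (u j) x != 0.
Proof.
move=> x_neq0; apply/existsP; apply: contraNT x_neq0; rewrite negb_exists.
move=> /forallP x_u0; rewrite [x]eigvec_expansion big1 // => j _.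
by move: (x_u0 j); rewrite negbK => /eqP ->; rewrite scale0r.
Qed.

Lemma qf_eigvec_gt0 A (lv : 'I_d -> R) x :
    (forall j, A *m u j = lv j *: u j) -> (forall j, 0 < lv j) ->
  x != 0 -> 0 < qf A x.
Proof.
move=> A_u lv_gt0 /eigvec_coord_neq0[j xj_neq0].
have terms_ge0 k : 0 <= lv k * vdot (u k) x ^+ 2 by rewrite mulr_ge0 ?sqr_ge0 ?ltW.
rewrite (qf_eigvec_expansion _ A_u) (bigD1 j) //= ltr_pwDl ?sumr_ge0 //.
by rewrite mulr_gt0 // lt_def sqrf_eq0 xj_neq0 sqr_ge0.
Qed.

Lemma eigenvalue_eigvec A l j : A^T = A -> A *m u j = l *: u j -> eigenvalue A l.
Proof.
move=> A_sym A_u; apply/eigenvalueP; exists (u j)^T.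
  by rewrite -[A]A_sym -trmx_mul A_u linearZ.
apply/eqP => u0; move: (u_unit j); rewrite u0 mul0mx => /matrixP/(_ 0 0).
by rewrite !mxE /= => /esym/eqP; rewrite oner_eq0.
Qed.

End OrthonormalEigenbasis.

Ltac derive_rules :=
  repeat lazymatch goal with
  | |- is_derive _ _ (fun _ => ?k) _ => apply: is_derive_cst
  | |- is_derive _ _ (fun y => @?F y + @?G y) _ => eapply (is_deriveD (f := F) (g := G))
  | |- is_derive _ _ (fun y => - @?F y) _ => eapply (is_deriveN (f := F))
  | |- is_derive _ _ (fun y => @?F y * @?G y) _ => eapply (is_deriveM (f := F) (g := G))
  | |- is_derive _ _ (fun y => @?F y ^+ 2) _ => eapply (is_deriveX (f := F) 2)
  | |- is_derive _ _ (fun y => vdot (?A *m y) ?w) _ => apply: is_derive_vdot_mulmx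
  | |- is_derive _ _ (fun y => qf _ y) _ => apply: is_derive_qf
  end.

Ltac differentiable_rules :=
  repeat lazymatch goal with
  | |- differentiable (fun _ => ?k) _ => apply: differentiable_cst
  | |- differentiable (fun y => @?F y + @?G y) _ => apply: (differentiableD (f := F) (g := G))
  | |- differentiable (fun y => - @?F y) _ => apply: (differentiableN (f := F))
  | |- differentiable (fun y => @?F y * @?G y) _ => apply: (differentiableM (f := F) (g := G))
  | |- differentiable (fun y => @?F y ^+ 2) _ => apply: (differentiableX (f := F) 1)
  | |- differentiable (fun y => qf _ y) _ => apply: differentiable_qf
  end.

Section LinearAttentionRisk.
Variables (R : realType) (d L : nat) (lam : R) (Sigma : 'M[R]_d).
Variables (sigma : 'I_d -> R) (u : 'I_d -> 'cV[R]_d).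
Hypotheses (lam_gt0 : 0 < lam) (L_ge1 : (1 <= L)%N).
Hypotheses (Sigma_sym : Sigma^T = Sigma) (Sigma_pd : posdef Sigma).
Hypotheses (sigma_decr : forall i j : 'I_d, (i < j)%N -> sigma j < sigma i).
Hypotheses (sigma_gt0 : forall i, 0 < sigma i).
Hypotheses (Sigma_u : forall i, Sigma *m u i = sigma i *: u i).
Hypotheses (u_unit : forall i, (u i)^T *m u i = 1).

Local Notation f := (Rlin Sigma lam L).
Local Notation t := (\tr Sigma).
Local Notation L' := (L%:R : R).

Lemma sigma_inj : injective sigma.
Proof.
move=> i j sij; have [ij|ji|/val_inj //] := ltngtP i j.
- by move: (sigma_decr ij); rewrite sij ltxx.
- by move: (sigma_decr ji); rewrite sij ltxx.
Qed.

Let vdot_u := vdot_eigvec Sigma_sym sigma_inj Sigma_u u_unit.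
Let qf_expansion := qf_eigvec_expansion Sigma_sym sigma_inj Sigma_u u_unit.
Let expansion := eigvec_expansion Sigma_sym sigma_inj Sigma_u u_unit.
Let coord_neq0 := eigvec_coord_neq0 Sigma_sym sigma_inj Sigma_u u_unit.
Let qf_u_gt0 := qf_eigvec_gt0 Sigma_sym sigma_inj Sigma_u u_unit.

Lemma Lr_ge1 : 1 <= L'.
Proof. by rewrite ler1n. Qed.

Lemma sigma_le_top i k : val i = 0%N -> sigma k <= sigma i.
Proof.
move=> i0; have [->//|ki] := eqVneq k i.
apply/ltW/sigma_decr; rewrite i0 lt0n.
by apply: contra ki => /eqP k0; apply/eqP/val_inj; rewrite /= k0 i0.
Qed.

Lemma Sigma2_sym : (Sigma *m Sigma)^T = Sigma *m Sigma.
Proof. by rewrite trmx_mul Sigma_sym. Qed.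

Lemma Sigma2_u i : Sigma *m Sigma *m u i = sigma i ^+ 2 *: u i.
Proof. by rewrite -mulmxA Sigma_u -scalemxAr Sigma_u scalerA. Qed.

Definition partial_a x := risk_da t lam L' (qf Sigma x) (qf (Sigma *m Sigma) x).
Definition partial_b x := risk_db lam L' (qf Sigma x).

Lemma is_derive_Rlin x v : is_derive x v f
  (2 * (partial_a x * vdot (Sigma *m x) v + partial_b x * vdot (Sigma *m Sigma *m x) v)).
Proof.
apply: is_derive_eq; first by rewrite /Rlin /=; derive_rules; rewrite ?Sigma2_sym.
rewrite /partial_a /partial_b /risk_da /risk_db /kappa /GRing.scale /=; ring.
Qed.

Lemma differentiable_Rlin x : differentiable f x.
Proof. by rewrite /Rlin /=; differentiable_rules. Qed.

Lemma Sigma_scale_u q i : Sigma *m (q *: u i) = (q * sigma i) *: u i.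
Proof. by rewrite -scalemxAr Sigma_u scalerA. Qed.

Lemma Sigma2_scale_u q i : Sigma *m Sigma *m (q *: u i) = (q * sigma i ^+ 2) *: u i.
Proof. by rewrite -scalemxAr Sigma2_u scalerA. Qed.

Lemma derive_Rlin_eigvec x j :
  derive f x (u j) = 2 * sigma j * vdot (u j) x * (partial_a x + sigma j * partial_b x).
Proof.
have [_ ->] := is_derive_Rlin x (u j).
rewrite -!vdot_mulmx_sym ?Sigma2_sym // !(vdotC x) Sigma_u Sigma2_u !vdotZl; ring.
Qed.

Definition hess_mx x : 'M[R]_d :=
  (2 * partial_a x) *: Sigma + (2 * partial_b x) *: (Sigma *m Sigma)
  + (8 * kappa lam L' * t) *: ((Sigma *m x) *m (Sigma *m x)^T)
  + (4 * kappa lam L' * (L' + 3)) *: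
      ((Sigma *m x) *m (Sigma *m Sigma *m x)^T + (Sigma *m Sigma *m x) *m (Sigma *m x)^T).

Lemma hessian_Rlin x : hessian f x = hess_mx x.
Proof.
apply/matrixP => i j; rewrite /hessian mxE.
have -> : (fun y => derive f y (ev R j)) = fun y => 2 * (partial_a y * vdot (Sigma *m y) (ev R j)
                                     + partial_b y * vdot (Sigma *m Sigma *m y) (ev R j)).
  by apply/funext => y; have [] := is_derive_Rlin y (ev R j).
apply: derive_val; apply: is_derive_eq.
  by rewrite /partial_a /partial_b /risk_da /risk_db; derive_rules; rewrite ?Sigma2_sym.
rewrite /hess_mx !(addmx_entry, scalemx_entry, outer_mx_entry).
rewrite !vdot_mulmx_ev ?Sigma2_sym // !vdot_evr.
rewrite /partial_a /partial_b /risk_da /risk_db /GRing.scale /=; ring.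
Qed.

Lemma hess_mx_eigvec q i j : hess_mx (q *: u i) *m u j =
  (2 * sigma j * (partial_a (q *: u i) + sigma j * partial_b (q *: u i))
   + (i == j)%:R * (8 * (q ^+ 2 * sigma i ^+ 2) * kappa lam L' * (t + (L' + 3) * sigma i)))
  *: u j.
Proof.
rewrite /hess_mx !mulmxDl -!scalemxAl !mulmxDl !mul_outer_mx Sigma_u Sigma2_u.
rewrite Sigma_scale_u Sigma2_scale_u !vdotZl !vdot_u.
have [<-|ij] := eqVneq i j.
  by rewrite !scalerDr !scalerA -!scalerDl; congr (_ *: _); ring.
rewrite !(mulr0, mul0r, scale0r, scaler0, addr0) !scalerA -scalerDl.
by congr (_ *: _); ring.
Qed.

Lemma qf_Sigma_ge0 x : 0 <= qf Sigma x.
Proof.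
by rewrite (qf_expansion _ Sigma_u) sumr_ge0 // => j _; rewrite mulr_ge0 ?sqr_ge0 ?ltW.
Qed.

Lemma qf_Sigma2_ge0 x : 0 <= qf (Sigma *m Sigma) x.
Proof. by rewrite (qf_expansion _ Sigma2_u) sumr_ge0 // => j _; rewrite mulr_ge0 ?sqr_ge0. Qed.

Lemma qf_Sigma2_le_top x i : val i = 0%N -> qf (Sigma *m Sigma) x <= sigma i * qf Sigma x.
Proof.
move=> i0; rewrite (qf_expansion _ Sigma_u) (qf_expansion _ Sigma2_u) mulr_sumr.
apply: ler_sum => j _; rewrite mulrA ler_wpM2r ?sqr_ge0 // expr2.
by rewrite ler_wpM2r ?sigma_le_top ?ltW.
Qed.

Lemma tr_ge0 : 0 <= t.
Proof. by rewrite /mxtrace sumr_ge0 // => k _; rewrite -qf_ev qf_Sigma_ge0. Qed.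

Lemma tr_gt0 (i : 'I_d) : 0 < t.
Proof.
rewrite /mxtrace (bigD1 i) //= ltr_pwDl ?sumr_ge0 // => [|k _].
  by rewrite -qf_ev Sigma_pd ?ev_neq0.
by rewrite -qf_ev qf_Sigma_ge0.
Qed.

Lemma qf_scale_eigvec A l q i : A *m u i = l *: u i -> qf A (q *: u i) = q ^+ 2 * l.
Proof. by move=> A_u; rewrite qfE -scalemxAr A_u scalerA vdotZl vdotZr vdot_u eqxx mulr1; ring. Qed.

Lemma partial_a_eigvec q i :
  partial_a (q *: u i) = risk_da t lam L' (q ^+ 2 * sigma i) (q ^+ 2 * sigma i ^+ 2).
Proof. by rewrite /partial_a (qf_scale_eigvec _ (Sigma_u i)) (qf_scale_eigvec _ (Sigma2_u i)). Qed.

Lemma partial_b_eigvec q i : partial_b (q *: u i) = risk_db lam L' (q ^+ 2 * sigma i).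
Proof. by rewrite /partial_b (qf_scale_eigvec _ (Sigma_u i)). Qed.

Lemma Rlin_risk x : f x = risk t lam L' (qf Sigma x) (qf (Sigma *m Sigma) x).
Proof. by []. Qed.

Lemma Rlin_eigvec q i :
  f (q *: u i) = risk t lam L' (q ^+ 2 * sigma i) (q ^+ 2 * sigma i ^+ 2).
Proof. by rewrite Rlin_risk (qf_scale_eigvec _ (Sigma_u i)) (qf_scale_eigvec _ (Sigma2_u i)). Qed.

Lemma partials_eigvec_sum_eq0 q i : q ^+ 2 = gamma_sq t lam L' (sigma i) ->
  partial_a (q *: u i) + sigma i * partial_b (q *: u i) = 0.
Proof.
move=> q2; apply/eqP; rewrite partial_a_eigvec partial_b_eigvec.
by rewrite risk_partials_ray_eq0 ?q2 ?Lr_ge1 ?(tr_gt0 i).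
Qed.

Definition gam i := Num.sqrt (gamma_sq t lam L' (sigma i)).

Lemma sqr_sign_gam (s : bool) i : ((-1) ^+ s * gam i) ^+ 2 = gamma_sq t lam L' (sigma i).
Proof.
rewrite exprMn sqrr_sign mul1r sqr_sqrtr // ltW // gamma_sq_gt0 ?Lr_ge1 ?(tr_gt0 i) //.
Qed.

Lemma crit_Rlin0 : crit f 0.
Proof.
split=> [|v]; first exact: differentiable_Rlin.
rewrite -deriveE; last exact: differentiable_Rlin.
by have [_ ->] := is_derive_Rlin 0 v; rewrite !mulmx0 !vdot0l !mulr0 addr0 mulr0.
Qed.

Lemma crit_Rlin_eigvec q i : q ^+ 2 = gamma_sq t lam L' (sigma i) -> crit f (q *: u i).
Proof.
move=> q2; split=> [|v]; first exact: differentiable_Rlin.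
rewrite -deriveE; last exact: differentiable_Rlin.
have [_ ->] := is_derive_Rlin (q *: u i) v.
rewrite Sigma_scale_u Sigma2_scale_u !vdotZl.
have := partials_eigvec_sum_eq0 q2; set P := partial_a _; set Q := partial_b _ => PQ0.
by rewrite -[RHS](mulr0 (2 * q * sigma i * vdot (u i) v)) -PQ0; ring.
Qed.

Lemma crit_Rlin_coord x j : crit f x -> vdot (u j) x * (partial_a x + sigma j * partial_b x) = 0.
Proof.
case=> df_x /(_ (u j)); rewrite -deriveE // derive_Rlin_eigvec -mulrA => /eqP.
by rewrite mulf_eq0 mulf_eq0 pnatr_eq0 (gt_eqF (sigma_gt0 j)) /= => /eqP.
Qed.

Lemma crit_Rlin_single_coord x i k : crit f x ->
  vdot (u i) x != 0 -> k != i -> vdot (u k) x = 0.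
Proof.
move=> crit_x xi_neq0 ki; apply/eqP; apply: contraT => xk_neq0.
have PQ0 j : vdot (u j) x != 0 -> partial_a x + sigma j * partial_b x = 0.
  by move=> xj; apply/eqP; move/eqP: (crit_Rlin_coord j crit_x); rewrite mulf_eq0 (negPf xj).
have Q0 : partial_b x = 0.
  have : (sigma k - sigma i) * partial_b x = (partial_a x + sigma k * partial_b x) - (partial_a x + sigma i * partial_b x).
    by ring.
  rewrite !PQ0 // subrr => /eqP; rewrite mulf_eq0 subr_eq0 (inj_eq sigma_inj) (negPf ki).
  by move/eqP.
have P0 : partial_a x = 0 by move: (PQ0 i xi_neq0); rewrite Q0 mulr0 addr0.
have x_neq0 : x != 0 by apply: contraNneq xi_neq0 => ->; rewrite vdotC vdot0l.
have b_gt0 : 0 < qf (Sigma *m Sigma) x.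
  by apply: (qf_u_gt0 Sigma2_u) => // j; rewrite exprn_gt0.
have := risk_da_gt0 lam_gt0 Lr_ge1 tr_ge0 b_gt0 Q0.
by rewrite -/(partial_a x) P0 ltxx.
Qed.

Lemma crit_RlinP x : crit f x -> x = 0 \/ exists i (s : bool), x = ((-1) ^+ s * gam i) *: u i.
Proof.
move=> crit_x; have [->|x_neq0] := eqVneq x 0; [by left | right].
have [i xi_neq0] := coord_neq0 x_neq0; set c := vdot (u i) x.
have xE : x = c *: u i.
  rewrite {1}[x]expansion (bigD1 i) //= big1 ?addr0 // => k ki.
  by rewrite (crit_Rlin_single_coord crit_x xi_neq0 ki) scale0r.
have /eqP : c * (partial_a x + sigma i * partial_b x) = 0 := crit_Rlin_coord i crit_x.
rewrite mulf_eq0 (negPf xi_neq0) /= xE partial_a_eigvec partial_b_eigvec.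
rewrite risk_partials_ray_eq0 ?Lr_ge1 ?(tr_gt0 i) // -(sqr_sign_gam false) eqf_sqr.
by case/orP => /eqP ->; exists i; [exists false | exists true; rewrite /= expr0 expr1 mul1r mulN1r].
Qed.

Lemma hess_mx_sym x : (hess_mx x)^T = hess_mx x.
Proof.
rewrite /hess_mx !linearD /= !linearZ /= Sigma_sym Sigma2_sym !trmx_mul !trmxK.
by rewrite [X in _ + X = _]addrC.
Qed.

Definition hess_eigenvalue i j : R :=
  if j == i then 8 * (lam / L') * sigma i * (t + (L' + 1) * sigma i)
  else 2 * (lam / L') * sigma j * (sigma i - sigma j) *
       (((L' - 1) * t + (L' + 1) * (L' + 3) * sigma i) / (t + (L' + 3) * sigma i)).

Lemma hessian_Rlin_eigvec q i : q ^+ 2 = gamma_sq t lam L' (sigma i) ->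
  forall j, hessian f (q *: u i) *m u j = hess_eigenvalue i j *: u j.
Proof.
move=> q2 j; rewrite hessian_Rlin hess_mx_eigvec; congr (_ *: _).
have PQ0 := partials_eigvec_sum_eq0 q2.
rewrite /hess_eigenvalue; have [<-|ji] := eqVneq i j.
  by rewrite PQ0 mulr0 add0r mul1r q2 gamma_sq_curvature ?Lr_ge1 ?(tr_gt0 i).
have -> : partial_a (q *: u i) = - (sigma i * partial_b (q *: u i)) by apply/eqP; rewrite -addr_eq0 PQ0.
by rewrite partial_b_eigvec q2 risk_db_gamma_sq ?Lr_ge1 ?(tr_gt0 i) //; rewrite mul0r addr0; ring.
Qed.

Lemma hess_eigenvalue_diag_gt0 i : 0 < hess_eigenvalue i i.
Proof.
have := Lr_ge1; have := tr_gt0 i; have := sigma_gt0 i; have := lam_gt0.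
by rewrite /hess_eigenvalue eqxx => *; rewrite !(mulr_gt0, invr_gt0) //; nra.
Qed.

Lemma hess_eigenvalue_offdiag i j : j != i ->
  exists2 c, 0 < c & hess_eigenvalue i j = c * (sigma i - sigma j).
Proof.
move=> ji; rewrite /hess_eigenvalue (negPf ji).
pose F := ((L' - 1) * t + (L' + 1) * (L' + 3) * sigma i) / (t + (L' + 3) * sigma i).
exists (2 * (lam / L') * sigma j * F); last by rewrite /F; ring.
have := Lr_ge1; have := tr_gt0 i; have := sigma_gt0 i; have := sigma_gt0 j.
have := lam_gt0; move=> *.
have : 0 <= (L' - 1) * t by rewrite mulr_ge0 //; lra.
have : 0 < (L' + 1) * (L' + 3) * sigma i by rewrite !mulr_gt0 //; lra.
by move=> *; rewrite /F !(mulr_gt0, invr_gt0) //; nra.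
Qed.

Lemma posdef_hessian_top q i : val i = 0%N -> q ^+ 2 = gamma_sq t lam L' (sigma i) ->
  posdef (hessian f (q *: u i)).
Proof.
move=> i0 q2 v v_neq0; apply: (qf_u_gt0 (hessian_Rlin_eigvec q2)) => // j.
have [->|ji] := eqVneq j i; first exact: hess_eigenvalue_diag_gt0.
have [c c_gt0 ->] := hess_eigenvalue_offdiag ji.
by rewrite mulr_gt0 // subr_gt0 lt_neqAle (inj_eq sigma_inj) ji sigma_le_top.
Qed.

Lemma hessian_saddle q i : (0 < val i)%N -> q ^+ 2 = gamma_sq t lam L' (sigma i) ->
  (exists a, eigenvalue (hessian f (q *: u i)) a /\ 0 < a) /\
  (exists a, eigenvalue (hessian f (q *: u i)) a /\ a < 0).
Proof.
move=> i_gt0 q2; have H_sym : (hessian f (q *: u i))^T = hessian f (q *: u i).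
  by rewrite hessian_Rlin hess_mx_sym.
have eig j := eigenvalue_eigvec u_unit H_sym (hessian_Rlin_eigvec q2 j).
split; first by exists (hess_eigenvalue i i); rewrite eig hess_eigenvalue_diag_gt0.
have d_gt0 : (0 < d)%N := ltn_trans i_gt0 (ltn_ord i).
pose j0 := Ordinal d_gt0; have j0i : j0 != i by rewrite -val_eqE /= eq_sym -lt0n.
exists (hess_eigenvalue i j0); split; first exact: eig.
have [c c_gt0 ->] := hess_eigenvalue_offdiag j0i.
by rewrite pmulr_rlt0 // subr_lt0 sigma_decr.
Qed.

Lemma strict_saddle_Rlin q i : (0 < val i)%N -> q ^+ 2 = gamma_sq t lam L' (sigma i) ->
  strict_saddle f (q *: u i).
Proof.
move=> i_gt0 q2; split; first exact: crit_Rlin_eigvec.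
by have [_] := hessian_saddle i_gt0 q2.
Qed.

Lemma global_min_top q i : val i = 0%N -> q ^+ 2 = gamma_sq t lam L' (sigma i) ->
  global_min f (q *: u i).
Proof.
move=> i0 q2 x; rewrite Rlin_eigvec q2 Rlin_risk.
apply: (risk_gamma_sq_le lam_gt0 Lr_ge1 (tr_gt0 i) (sigma_gt0 i)).
- exact: qf_Sigma_ge0.
- exact: qf_Sigma2_ge0.
- exact: qf_Sigma2_le_top.
Qed.

Lemma hessian_Rlin0 :
  hessian f 0 = (2 * partial_a 0) *: Sigma + (2 * partial_b 0) *: (Sigma *m Sigma).
Proof. by rewrite hessian_Rlin /hess_mx !(mulmx0, mul0mx, trmx0, scaler0, addr0). Qed.

Lemma negdef_hessian0 : negdef (hessian f 0).
Proof.
move=> v v_neq0; have [j _] := coord_neq0 v_neq0.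
rewrite hessian_Rlin0 qfDl !qfZl /partial_a /partial_b /risk_da /risk_db !qf0 !mulr0 !add0r.
have := Sigma_pd v_neq0; have := qf_Sigma2_ge0 v; have := tr_gt0 j.
have := Lr_ge1; have := lam_gt0; move=> *.
have : 0 < 2 * lam / L' * t by rewrite !(mulr_gt0, invr_gt0) //; lra.
have : 0 < 2 * lam * (L' + 1) / L' by rewrite !(mulr_gt0, invr_gt0) //; lra.
nra.
Qed.

Lemma local_max0 : local_max f 0.
Proof.
have k_gt0 := kappa_gt0 lam_gt0 Lr_ge1; have := Lr_ge1; have := lam_gt0; move=> *.
have c_gt0 : 0 < kappa lam L' * (L' + 3) by rewrite mulr_gt0 //; lra.
have eps_gt0 : 0 < 2 * lam / L' / (kappa lam L' * (L' + 3)).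
  by rewrite !(mulr_gt0, invr_gt0) //; lra.
have qf_cont : qf Sigma x @[x --> (0 : 'cV[R]_d)] --> 0.
  by rewrite -(qf0 Sigma); exact: differentiable_continuous (differentiable_qf Sigma 0).
rewrite /local_max; near=> x.
have a_small : qf Sigma x <= 2 * lam / L' / (kappa lam L' * (L' + 3)).
  by near: x; exact: cvgr_le qf_cont _ eps_gt0.
have -> : f 0 = t by rewrite /Rlin /= !qf0; ring.
rewrite Rlin_risk; apply: (risk_le_t lam_gt0 Lr_ge1 tr_ge0 (qf_Sigma_ge0 x) (qf_Sigma2_ge0 x)).
by rewrite mulrC -ler_pdivlMr.
Unshelve. all: by end_near.
Qed.

End LinearAttentionRisk.

Theorem proposition15 (R : realType) (d L : nat) (lam : R)
    (Sigma : 'M[R]_d) (sigma : 'I_d -> R) (u : 'I_d -> 'cV[R]_d) :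
  0 < lam -> (1 <= L)%N ->
  Sigma^T = Sigma -> posdef Sigma ->
  (forall i j : 'I_d, (i < j)%N -> sigma j < sigma i) ->
  (forall i, 0 < sigma i) ->
  (forall i, Sigma *m u i = sigma i *: u i) ->
  (forall i, (u i)^T *m u i = 1) ->
  let f := Rlin Sigma lam L in
  let t := \tr Sigma in
  let L' := (L%:R : R) in
  let gam i := Num.sqrt ((t + (L' + 1) * sigma i) /
                 (lam / L' * sigma i * (L' + 2) * (t + (L' + 3) * sigma i))) in
  let mu (s : bool) i := ((-1) ^+ s * gam i) *: u i in
  [/\ crit f = [set 0] `|` [set x | exists i s, x = mu s i],
      negdef (hessian f 0) /\ local_max f 0,
      (forall i s j, hessian f (mu s i) *m u j =
         (if j == i then 8 * (lam / L') * sigma i * (t + (L' + 1) * sigma i)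
          else 2 * (lam / L') * sigma j * (sigma i - sigma j) *
               (((L' - 1) * t + (L' + 1) * (L' + 3) * sigma i) /
                (t + (L' + 3) * sigma i))) *: u j),
      (forall i s, val i = 0%N -> posdef (hessian f (mu s i))) /\
      (forall i s, (0 < val i)%N ->
         (exists a, eigenvalue (hessian f (mu s i)) a /\ 0 < a) /\
         (exists a, eigenvalue (hessian f (mu s i)) a /\ a < 0))
    & (forall i s, val i = 0%N -> global_min f (mu s i)) /\
      (forall i s, (0 < val i)%N -> strict_saddle f (mu s i))].
Proof.
move=> lam_gt0 L_ge1 Sigma_sym Sigma_pd sigma_decr sigma_gt0 Sigma_u u_unit f t L' gam mu.
have sqr_mu (s : bool) i : ((-1) ^+ s * gam i) ^+ 2 = gamma_sq t lam L' (sigma i).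
  by apply: sqr_sign_gam; auto.
split.
- apply/seteqP; split=> x /=; first by move=> crit_x; apply: crit_RlinP; auto.
  by case=> [->|[i [s ->]]]; [apply: crit_Rlin0 | apply: crit_Rlin_eigvec]; auto.
- by split; [apply: negdef_hessian0 | apply: local_max0]; auto.
- by move=> i s j; apply: hessian_Rlin_eigvec; auto.
- by split=> i s i0; [apply: posdef_hessian_top | apply: hessian_saddle]; auto.
- by split=> i s i0; [apply: global_min_top | apply: strict_saddle_Rlin]; auto.
Qed.
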